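(* Let $\sigma\in\mathbb R^{d}$ with $\sigma\ne0$, $\bar r_X\ge0$, and $0\le\underline c\le\bar c\le1$ with $\underline c<1$. For $r_X,c\in\mathbb R^d$ with $r_X'c\neq-1$ let $z_X(r_X,c)=\dfrac{r_X'\sigma\sqrt{1-\|c\|^2}}{1+r_X'c}$. Then $$\sup\{|z_X(r_X,c)|:\|r_X\|\le\bar r_X,\ \|c\|\in[\underline c,\bar c],\ \|c\|\ne1,\ r_X'c\ne-1\}=\bar z_X(\bar r_X,\underline c,\bar c),$$ where, with $m=\max\{\min\{\bar r_X,\bar c\},\underline c\}$, $\bar z_X(\bar r_X,\underline c,\bar c)=\dfrac{\bar r_X\|\sigma\|\sqrt{1-m^2}}{1-\bar r_Xm}$ if $\bar r_X\bar c<1$ and $\bar z_X(\bar r_X,\underline c,\bar c)=+\infty$ if $\bar r_X\bar c\ge1$.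
   Context: $\|\cdot\|$ is the Euclidean norm. *)

From HB Require Import structures.
From mathcomp Require Import all_boot all_order all_algebra.
From mathcomp Require Import all_classical all_reals all_analysis.
Set Implicit Arguments. Unset Strict Implicit. Unset Printing Implicit Defensive.
Import Order.TTheory GRing.Theory Num.Theory.
Local Open Scope ring_scope.

Definition dotv (R : realType) (d : nat) (x y : 'rV[R]_d) : R :=
  \sum_(i < d) x ord0 i * y ord0 i.

Definition enorm (R : realType) (d : nat) (x : 'rV[R]_d) : R :=
  Num.sqrt (dotv x x).

Definition zX (R : realType) (d : nat) (sigma rX c : 'rV[R]_d) : R :=
  dotv rX sigma * Num.sqrt (1 - enorm c ^+ 2) / (1 + dotv rX c).

Definition zbarX (R : realType) (d : nat) (sigma : 'rV[R]_d) (rbar cl cu : R)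
  : \bar R :=
  let m := Num.max (Num.min rbar cu) cl in
  if rbar * cu < 1 then
    ((rbar * enorm sigma * Num.sqrt (1 - m ^+ 2)) / (1 - rbar * m))%:E
  else +oo%E.

From HB Require Import structures.
From mathcomp Require Import all_boot all_order all_algebra.
From mathcomp Require Import all_classical all_reals all_analysis.
From mathcomp Require Import ring lra.
Import Order.TTheory GRing.Theory Num.Theory.
Local Open Scope ring_scope.
Local Open Scope classical_set_scope.
Set Implicit Arguments. Unset Strict Implicit.

(* Write rho = ||rX||, t = ||c|| and N = ||sigma||.  By
   Cauchy-Schwarz, |rX'sigma| <= rho N and 1 + rX'c >= 1 - rho t, so
   |z_X(rX, c)| <= zprofile N rho t := rho N sqrt(1 - t^2) / (1 - rho t)
   whenever rho t < 1; conversely this value is attained by the aligned pair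
   rX = rho u, c = -t u, with u = sigma / N.  The problem therefore reduces to
   maximizing the scalar function zprofile over rho in [0, rbar] and
   t in [cl, cu].  It is increasing in rho, and t |-> sqrt(1 - t^2) / (1 - a t)
   increases on [0, a] and decreases on [a, 1]; hence, when rbar cu < 1, the
   maximum is at rho = rbar and t = clamp cl cu rbar, the point of [cl, cu]
   closest to rbar.  When rbar cu >= 1, the denominator 1 - rho t can be made
   arbitrarily small with rho t < 1 and the supremum is +oo. *)

Section InnerProduct.
Context {R : realType} {d : nat}.
Implicit Types (x y : 'rV[R]_d) (a b : R).

Lemma dotvC x y : dotv x y = dotv y x.
Proof. by apply: eq_bigr => i _; rewrite mulrC. Qed.

Lemma dotvZl a x y : dotv (a *: x) y = a * dotv x y.
Proof. by rewrite /dotv mulr_sumr; apply: eq_bigr => i _; rewrite mxE mulrA. Qed.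

Lemma dotvZr a x y : dotv x (a *: y) = a * dotv x y.
Proof. by rewrite dotvC dotvZl dotvC. Qed.

Lemma dotv_ge0 x : 0 <= dotv x x.
Proof. by apply: sumr_ge0 => i _; rewrite -expr2 sqr_ge0. Qed.

Lemma dotv_eq0 x : dotv x x = 0 -> x = 0.
Proof.
move=> x0; apply/rowP => i; rewrite mxE.
have sq_ge0 (j : 'I_d) : true -> 0 <= x ord0 j * x ord0 j.
  by move=> _; rewrite -expr2 sqr_ge0.
have := @psumr_eq0P _ _ _ _ sq_ge0 x0 i; rewrite -expr2 => /(_ isT) /eqP.
by rewrite sqrf_eq0 => /eqP.
Qed.

(* The squared norm of a x - b y, expanded; with a = y'y and b = x'y it
   yields Cauchy-Schwarz. *)
Lemma dotv_sub_expand a b x y :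
  dotv (a *: x - b *: y) (a *: x - b *: y)
  = a ^+ 2 * dotv x x - 2 * a * b * dotv x y + b ^+ 2 * dotv y y.
Proof.
rewrite /dotv !mulr_sumr -sumrB -big_split /=; apply: eq_bigr => i _.
by rewrite !mxE; ring.
Qed.

Lemma dotv_CauchySchwarz_sq x y : dotv x y ^+ 2 <= dotv x x * dotv y y.
Proof.
have [y0|yn0] := eqVneq y 0.
  have -> : dotv x y = 0 by rewrite y0 /dotv big1 // => i _; rewrite mxE mulr0.
  by rewrite expr0n /= mulr_ge0 ?dotv_ge0.
have Cpos : 0 < dotv y y.
  by rewrite lt_def dotv_ge0 andbT; apply: contra_neq yn0 => /dotv_eq0.
have := dotv_ge0 (dotv y y *: x - dotv x y *: y).
rewrite dotv_sub_expand.
set A := dotv x x; set B := dotv x y; set C := dotv y y => H.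
have : 0 <= C * (A * C - B ^+ 2).
  by have -> : C * (A * C - B ^+ 2) = C ^+ 2 * A - 2 * C * B * B + B ^+ 2 * C by ring.
by rewrite pmulr_rge0 // subr_ge0 mulrC.
Qed.

Lemma enorm_ge0 x : 0 <= enorm x.
Proof. exact: sqrtr_ge0. Qed.

Lemma enorm_sq x : enorm x ^+ 2 = dotv x x.
Proof. by rewrite sqr_sqrtr // dotv_ge0. Qed.

Lemma enorm_gt0 x : x != 0 -> 0 < enorm x.
Proof.
move=> xn0; rewrite sqrtr_gt0 lt_def dotv_ge0 andbT.
by apply: contra_neq xn0 => /dotv_eq0.
Qed.

Lemma enormZ a x : enorm (a *: x) = `|a| * enorm x.
Proof.
by rewrite /enorm dotvZl dotvZr mulrA -expr2 sqrtrM ?sqrtr_sqr ?sqr_ge0.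
Qed.

Lemma dotv_CauchySchwarz x y : `|dotv x y| <= enorm x * enorm y.
Proof.
rewrite -sqrtrM ?dotv_ge0 // -sqrtr_sqr ler_sqrt ?dotv_CauchySchwarz_sq //.
exact: mulr_ge0 (dotv_ge0 _) (dotv_ge0 _).
Qed.

End InnerProduct.

(* The value of |z_X| at an aligned pair with ||rX|| = rho, ||c|| = t and
   ||sigma|| = N; it bounds |z_X| at every pair with these norms. *)
Definition zprofile {R : realType} (N rho t : R) : R :=
  rho * N * Num.sqrt (1 - t ^+ 2) / (1 - rho * t).

Definition clamp {R : realType} (l u a : R) : R := Num.max (Num.min a u) l.

Section Profile.
Context {R : realType}.
Implicit Types (N K M a rho t m l u : R).

Lemma zprofile_ge0 N rho t :
  0 <= N -> 0 <= rho -> rho * t < 1 -> 0 <= zprofile N rho t.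
Proof.
move=> N0 rho0 rt1; rewrite /zprofile divr_ge0 ?subr_ge0 ?(ltW rt1) //.
by rewrite !mulr_ge0 ?sqrtr_ge0.
Qed.

Lemma zprofile_le_rho N rho a t : 0 <= N -> 0 <= t -> 0 <= rho -> rho <= a ->
  a * t < 1 -> zprofile N rho t <= zprofile N a t.
Proof.
move=> N0 t0 rho0 ra at1.
have rt1 : rho * t < 1 by apply: le_lt_trans at1; rewrite ler_wpM2r.
have split_r r : zprofile N r t = N * Num.sqrt (1 - t ^+ 2) * (r / (1 - r * t)).
  by rewrite /zprofile; ring.
rewrite !split_r ler_wpM2l ?mulr_ge0 ?sqrtr_ge0 //.
by rewrite ler_pdivrMr ?subr_gt0 // mulrAC ler_pdivlMr ?subr_gt0 //; nra.
Qed.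

(* Shape of t |-> sqrt(1 - t^2) / (1 - a t): it is maximal at m among the t
   lying on the far side of m from a, i.e. with (t - m)(m - a) >= 0. *)
Lemma sqrt_ratio_le a t m : 0 <= a -> 0 <= t <= 1 -> 0 <= m < 1 ->
  a * m < 1 -> a * t < 1 -> 0 <= (t - m) * (m - a) ->
  Num.sqrt (1 - t ^+ 2) / (1 - a * t) <= Num.sqrt (1 - m ^+ 2) / (1 - a * m).
Proof.
move=> a0 /andP[t0 t1] /andP[m0 m1] am1 at1 tma.
rewrite ler_pdivrMr ?subr_gt0 // mulrAC ler_pdivlMr ?subr_gt0 //.
rewrite -ler_sqr ?nnegrE ?mulr_ge0 ?sqrtr_ge0 ?subr_ge0 ?(ltW am1) ?(ltW at1) //.
rewrite !exprMn !sqr_sqrtr ?subr_ge0 ?expr_le1 ?(ltW m1) // -subr_ge0.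
have -> : (1 - m ^+ 2) * (1 - a * t) ^+ 2 - (1 - t ^+ 2) * (1 - a * m) ^+ 2
  = (t - m) ^+ 2 * ((a - m) ^+ 2 + (1 - m ^+ 2))
    + 2 * ((t - m) * (m - a)) * (1 - a * m) by ring.
apply: addr_ge0.
- by rewrite mulr_ge0 ?sqr_ge0 // addr_ge0 ?sqr_ge0 // subr_ge0 expr_le1 // (ltW m1).
- by rewrite mulr_ge0 ?(mulr_ge0 _ tma) // subr_ge0 ltW.
Qed.

Lemma zprofile_le_t N a t m : 0 <= N -> 0 <= a -> 0 <= t <= 1 -> 0 <= m < 1 ->
  a * m < 1 -> a * t < 1 -> 0 <= (t - m) * (m - a) ->
  zprofile N a t <= zprofile N a m.
Proof.
move=> N0 a0 t01 m01 am1 at1 tma.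
have split_t r : zprofile N a r = a * N * (Num.sqrt (1 - r ^+ 2) / (1 - a * r)).
  by rewrite /zprofile; ring.
by rewrite !split_t ler_wpM2l ?mulr_ge0 ?sqrt_ratio_le.
Qed.

Lemma clamp_props l u a : 0 <= a -> 0 <= l -> l <= u -> l < 1 -> a * u < 1 ->
  [/\ l <= clamp l u a, clamp l u a <= u, clamp l u a < 1, a * clamp l u a < 1
    & forall t, l <= t <= u -> 0 <= (t - clamp l u a) * (clamp l u a - a)].
Proof.
move=> a0 l0 lu l1 au1; rewrite /clamp maxEle minEle.
by case: (lerP a u) => ?; case: (lerP _ l) => ?;
  (split; [lra | lra | nra | nra | move=> t /andP[? ?]; nra]).
Qed.

Lemma ratio_unbounded K M : 0 < K -> exists2 s : R, 0 < s < 1 & M < s * K / (1 - s).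
Proof.
move=> K0; pose M' : R := `|M| + 1.
have M'0 : 0 < M' by have := normr_ge0 M; rewrite /M'; lra.
have MM' : M < M' by have := ler_norm M; rewrite /M'; lra.
have MK : 0 < M' + K by lra.
exists (M' / (M' + K)).
  by rewrite divr_gt0 //= ltr_pdivrMr // mul1r ltrDl.
by have -> : M' / (M' + K) * K / (1 - M' / (M' + K)) = M' by field; lra.
Qed.

Lemma sqrt_ratio_unbounded N l M : 0 < N -> 0 <= l < 1 ->
  exists2 t : R, l <= t < 1 & M < N * Num.sqrt (1 - t ^+ 2) / (1 - t).
Proof.
move=> N0 /andP[l0 l1]; pose M' : R := `|M| + 1.
have M'0 : 0 < M' by have := normr_ge0 M; rewrite /M'; lra.
have MM' : M < M' by have := ler_norm M; rewrite /M'; lra.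
pose e := Num.min (1 - l) (N ^+ 2 / (2 * M' ^+ 2)).
have e0 : 0 < e by rewrite lt_min subr_gt0 l1 divr_gt0 ?exprn_gt0 ?mulr_gt0.
have el : e <= 1 - l by rewrite ge_min lexx.
have eN : e * (2 * M' ^+ 2) <= N ^+ 2.
  by rewrite -ler_pdivlMr ?mulr_gt0 ?exprn_gt0 // ge_min lexx orbT.
exists (1 - e); first by apply/andP; split; lra.
apply: (lt_le_trans MM'); have -> : 1 - (1 - e) = e by ring.
have sq0 : 0 <= 1 - (1 - e) ^+ 2 by nra.
rewrite ler_pdivlMr // -ler_sqr ?nnegrE ?mulr_ge0 ?sqrtr_ge0 ?(ltW e0) ?(ltW N0) ?(ltW M'0) //.
rewrite !exprMn sqr_sqrtr //.
have e1 : e <= 1 by lra.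
have := ler_wpM2l (ltW e0) eN; nra.
Qed.

(* If rbar u >= 1, zprofile is unbounded on the admissible parameters:
   take t = u, rho = s / u with s -> 1 if u < 1, and rho = 1, t -> 1 if
   u = 1. *)
Lemma zprofile_unbounded N rbar l u M : 0 < N -> 0 <= l <= u -> u <= 1 -> l < 1 ->
  1 <= rbar * u -> exists rho t : R,
  [/\ 0 <= rho <= rbar, l <= t <= u, t < 1, rho * t < 1 & M < zprofile N rho t].
Proof.
move=> N0 /andP[l0 lu] u1 l1 ru1.
have [u_lt1|u_ge1] := ltP u 1.
- have u0 : 0 < u.
    rewrite lt_neqAle (le_trans l0 lu) andbT.
    by apply: contraTneq ru1 => <-; rewrite mulr0 -ltNge ltr01.
  pose K := N * Num.sqrt (1 - u ^+ 2) / u.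
  have K0 : 0 < K by rewrite divr_gt0 // mulr_gt0 // sqrtr_gt0 subr_gt0 expr_lt1 ?(ltW u0).
  have [s /andP[s0 s1] Ms] := ratio_unbounded M K0.
  exists (s / u), u; split => //; try lra.
  + by rewrite divr_ge0 ?(ltW s0) ?(ltW u0) //= ler_pdivrMr //; lra.
  + by rewrite divfK ?gt_eqF.
  + suff -> : zprofile N (s / u) u = s * K / (1 - s) by [].
    by rewrite /zprofile /K divfK ?gt_eqF //; field; rewrite !gt_eqF ?subr_gt0.
- have u_eq1 : u = 1 by apply: le_anti; rewrite u1 u_ge1.
  rewrite u_eq1 mulr1 in ru1.
  have [t /andP[lt t1] Mt] := sqrt_ratio_unbounded M N0 (introT andP (conj l0 l1)).
  exists 1, t; split; rewrite ?mul1r ?ler01 ?u_eq1 ?lt ?(ltW t1) //.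
  by rewrite /zprofile !mul1r.
Qed.

End Profile.

Section Realization.
Context {R : realType} {d : nat}.
Implicit Types (sigma rX c : 'rV[R]_d) (rho t : R).

Lemma normzX_le_zprofile sigma rX c : enorm rX * enorm c < 1 ->
  `|zX sigma rX c| <= zprofile (enorm sigma) (enorm rX) (enorm c).
Proof.
move=> rt1.
have num := dotv_CauchySchwarz rX sigma.
have den : 1 - enorm rX * enorm c <= 1 + dotv rX c.
  by have := dotv_CauchySchwarz rX c; rewrite ler_norml => /andP[? _]; lra.
have den0 : 0 < 1 - enorm rX * enorm c by rewrite subr_gt0.
have den1 : 0 < 1 + dotv rX c := lt_le_trans den0 den.
rewrite /zX /zprofile normrM normfV normrM (ger0_norm (sqrtr_ge0 _)) (gtr0_norm den1).
rewrite ler_pM ?mulr_ge0 ?sqrtr_ge0 ?invr_ge0 ?(ltW den1) //.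
- by rewrite ler_wpM2r ?sqrtr_ge0.
- by rewrite lef_pV2 ?posrE.
Qed.

(* The aligned pair rX = rho u, c = -t u (u = sigma / ||sigma||) attains
   the value zprofile. *)
Lemma zX_attains sigma rho t : sigma != 0 -> 0 <= rho -> 0 <= t -> rho * t < 1 ->
  exists rX c, [/\ enorm rX = rho, enorm c = t, dotv rX c = - (rho * t)
    & `|zX sigma rX c| = zprofile (enorm sigma) rho t].
Proof.
move=> sn0 rho0 t0 rt1.
have N0 := enorm_gt0 sn0; set N := enorm sigma in N0 *.
pose v := N^-1 *: sigma.
have nv : enorm v = 1 by rewrite enormZ normfV gtr0_norm // mulVf ?gt_eqF.
have dvv : dotv v v = 1 by rewrite -enorm_sq nv expr1n.
have dvs : dotv v sigma = N by rewrite dotvZl -enorm_sq expr2 mulKf ?gt_eqF.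
exists (rho *: v), ((- t) *: v).
have drc : dotv (rho *: v) ((- t) *: v) = - (rho * t).
  by rewrite dotvZl dotvZr dvv mulr1 mulrN mulrC.
have nc : enorm ((- t) *: v) = t by rewrite enormZ nv mulr1 normrN ger0_norm.
split => //; first by rewrite enormZ nv mulr1 ger0_norm.
by rewrite /zX nc drc dotvZl dvs ger0_norm // zprofile_ge0 // ltW.
Qed.

Lemma normzX_le_zbar sigma rX c rbar l u :
  0 <= rbar -> 0 <= l -> l <= u -> u <= 1 -> l < 1 -> rbar * u < 1 ->
  enorm rX <= rbar -> l <= enorm c <= u ->
  `|zX sigma rX c| <= zprofile (enorm sigma) rbar (clamp l u rbar).
Proof.
move=> r0 l0 lu u1 l1 ru1 rXr /andP[lc cu].
have [lm mu m1 rm1 shape] := clamp_props r0 l0 lu l1 ru1.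
have c0 := enorm_ge0 c; have rX0 := enorm_ge0 rX; have N0 := enorm_ge0 sigma.
have rc1 : rbar * enorm c < 1 by apply: le_lt_trans ru1; rewrite ler_wpM2l.
have rXc1 : enorm rX * enorm c < 1 by apply: le_lt_trans rc1; rewrite ler_wpM2r.
apply: le_trans (normzX_le_zprofile sigma rXc1) _.
apply: le_trans (zprofile_le_rho N0 c0 rX0 rXr rc1) _.
apply: zprofile_le_t => //.
- by rewrite c0 (le_trans cu u1).
- by rewrite (le_trans l0 lm) m1.
- by rewrite shape ?lc.
Qed.

End Realization.

Lemma ereal_sup_unbounded (R : realType) (S : set \bar R) :
  (forall M : R, exists2 x, S x & (M%:E < x)%E) -> ereal_sup S = +oo%E.
Proof.
move=> unb; case E: (ereal_sup S) => [r| |] //.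
- have [x Sx rx] := unb r.
  by have := lt_le_trans rx (ereal_sup_ubound Sx); rewrite E ltxx.
- have [x Sx x0] := unb 0.
  by have := lt_le_trans x0 (ereal_sup_ubound Sx); rewrite E.
Qed.

Unset Implicit Arguments. Set Strict Implicit.

Theorem mainTheorem14 (R : realType) (d : nat) (sigma : 'rV[R]_d)
  (rbar cl cu : R) :
  sigma != 0 -> 0 <= rbar -> 0 <= cl -> cl <= cu -> cu <= 1 -> cl < 1 ->
  ereal_sup [set x : \bar R | exists (rX c : 'rV[R]_d),
      [/\ enorm rX <= rbar, cl <= enorm c <= cu, enorm c != 1,
          dotv rX c != -1 & x = (`|zX sigma rX c|)%:E]]
  = zbarX sigma rbar cl cu.
Proof.
move=> sn0 r0 l0 lu u1 l1.
set S := [set x : \bar R | _].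
have profile_in_S rho t : 0 <= rho <= rbar -> cl <= t <= cu -> t < 1 ->
    rho * t < 1 -> S (zprofile (enorm sigma) rho t)%:E.
  move=> /andP[rho0 rhor] /andP[lt tu] t1 rt1.
  have [rX [c [nrX nc drc zXc]]] := zX_attains sn0 rho0 (le_trans l0 lt) rt1.
  exists rX, c; rewrite nrX nc drc zXc; split; rewrite ?lt ?tu ?(lt_eqF t1) //.
  by rewrite eqr_opp (lt_eqF rt1).
rewrite /zbarX /= -/(clamp cl cu rbar); case: ltP => ru1.
- have [lm mu m1 rm1 _] := clamp_props r0 l0 lu l1 ru1.
  apply: le_anti; apply/andP; split.
    apply: ge_ereal_sup => _ [rX [c [rXr c_in _ _ ->]]].
    by rewrite lee_fin normzX_le_zbar.
  apply: ereal_sup_ubound; apply: profile_in_S; rewrite ?r0 ?lm ?mu ?lexx //.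
- apply: ereal_sup_unbounded => M.
  have [rho [t [rho_in t_in t1 rt1 Mt]]] :=
    zprofile_unbounded M (enorm_gt0 sn0) (introT andP (conj l0 lu)) u1 l1 ru1.
  by exists (zprofile (enorm sigma) rho t)%:E; [exact: profile_in_S | rewrite lte_fin].
Qed.
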